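(* Let $(P,\le,\mu,\gamma)$ be a preordered heap with target multiplication $\tau(a,b)=\gamma(\mu(\gamma a,\gamma b))$. For $a,x\in P$ define $a/x=\tau(a,\gamma x)$ and $x\backslash a=\tau(\gamma x,a)$. Then for all $a,x,y\in P$: $y\le a/x$ if and only if $x\le y\backslash a$.
   Context: A preordered heap is a structure $(P,\le,\mu,\gamma)$ where $(P,\le)$ is a preorder (reflexive and transitive relation); $\mu\colon P\times P\to P$ (source multiplication) is monotonic in both arguments; $\gamma\colon P\to P$ (involution) is antitone ($a\le b\Rightarrow \gamma b\le\gamma a$); and the following axioms hold: (A1) $\gamma(\gamma(a))=a$ for all $a$; (A2a) $\mu(a,\gamma(\mu(\gamma b,a)))\le b$ for all $a,b\in P$; (A2b) $\mu(\gamma(\mu(a,\gamma b)),a)\le b$ for all $a,b\in P$. *)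

Definition preordered_heap {P : Type} (le : P -> P -> Prop)
  (mu : P -> P -> P) (gamma : P -> P) : Prop :=
  (forall a, le a a) /\
  (forall a b c, le a b -> le b c -> le a c) /\
  (forall a a' b b', le a a' -> le b b' -> le (mu a b) (mu a' b')) /\
  (forall a b, le a b -> le (gamma b) (gamma a)) /\
  (* (A1) *)
  (forall a, gamma (gamma a) = a) /\
  (* (A2a) *)
  (forall a b, le (mu a (gamma (mu (gamma b) a))) b) /\
  (* (A2b) *)
  (forall a b, le (mu (gamma (mu a (gamma b))) a) b).

Definition tau {P : Type} (mu : P -> P -> P) (gamma : P -> P) (a b : P) : P :=
  gamma (mu (gamma a) (gamma b)).

Definition rdiv {P : Type} (mu : P -> P -> P) (gamma : P -> P) (a x : P) : P :=
  tau mu gamma a (gamma x).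

Definition ldiv {P : Type} (mu : P -> P -> P) (gamma : P -> P) (x a : P) : P :=
  tau mu gamma (gamma x) a.


(* By (A1), a/x = gamma (mu (gamma a) x) and y\a = gamma (mu y (gamma a)), so
   with c = gamma a the claim is the adjunction
   y <= gamma (mu c x)  <->  x <= gamma (mu y c).
   Since gamma is an antitone involution, u <= gamma v and v <= gamma u are
   equivalent; so the forward direction amounts to mu y c <= gamma x, which
   follows from monotonicity of mu and (A2b), and the backward direction to
   mu c x <= gamma y, which follows from monotonicity of mu and (A2a). *)

Section PreorderedHeap.

Variables (P : Type) (le : P -> P -> Prop) (mu : P -> P -> P) (gamma : P -> P).

Hypothesis le_refl : forall a, le a a.
Hypothesis le_trans : forall a b c, le a b -> le b c -> le a c.
Hypothesis le_mu : forall a a' b b', le a a' -> le b b' -> le (mu a b) (mu a' b').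
Hypothesis le_gamma : forall a b, le a b -> le (gamma b) (gamma a).
Hypothesis gammaK : forall a, gamma (gamma a) = a.
Hypothesis mu_gamma_mu_r : forall a b, le (mu a (gamma (mu (gamma b) a))) b.
Hypothesis mu_gamma_mu_l : forall a b, le (mu (gamma (mu a (gamma b))) a) b.

Lemma le_gamma_sym a b : le a (gamma b) -> le b (gamma a).
Proof.
  intro Hab. apply le_gamma in Hab. now rewrite gammaK in Hab.
Qed.

Lemma rdivE a x : rdiv mu gamma a x = gamma (mu (gamma a) x).
Proof. unfold rdiv, tau. now rewrite gammaK. Qed.

Lemma ldivE x a : ldiv mu gamma x a = gamma (mu x (gamma a)).
Proof. unfold ldiv, tau. now rewrite gammaK. Qed.

Lemma le_gamma_mu_swap_r c x y :
  le y (gamma (mu c x)) -> le x (gamma (mu y c)).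
Proof.
  intro Hy. apply le_gamma_sym.
  apply le_trans with (mu (gamma (mu c x)) c).
  - apply le_mu; [exact Hy | apply le_refl].
  - pose proof (mu_gamma_mu_l c (gamma x)) as Hc. now rewrite gammaK in Hc.
Qed.

Lemma le_gamma_mu_swap_l c x y :
  le x (gamma (mu y c)) -> le y (gamma (mu c x)).
Proof.
  intro Hx. apply le_gamma_sym.
  apply le_trans with (mu c (gamma (mu y c))).
  - apply le_mu; [apply le_refl | exact Hx].
  - pose proof (mu_gamma_mu_r c (gamma y)) as Hc. now rewrite gammaK in Hc.
Qed.

End PreorderedHeap.

Theorem mainTheorem2 (P : Type) (le : P -> P -> Prop) (mu : P -> P -> P)
  (gamma : P -> P) (H : preordered_heap le mu gamma) :
  forall a x y : P, le y (rdiv mu gamma a x) <-> le x (ldiv mu gamma y a).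
Proof.
  destruct H as [Hrefl [Htrans [Hmu [Hgamma [HK [HA2a HA2b]]]]]].
  intros a x y. rewrite rdivE, ldivE by exact HK. split.
  - now apply le_gamma_mu_swap_r.
  - now apply le_gamma_mu_swap_l.
Qed.
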